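(* Let $f:U\subseteq\mathbb{R}^n\to\mathbb{R}$ satisfy the Regularity Assumption described in the context, with single-valued adaptation $\partial_1 f$ of its Clarke subdifferential and Newton differential $\mathcal{H}f$. Then there exists $\tau\in(0,\infty)$ such that for all $x\in U$ and for all $$x^{+}\in\{x-H^{-1}\partial_1 f(x)\;|\;H\in\mathcal{H}f(x),\ \det H\neq 0\}\cap U,$$ one has $$\|\partial_1 f(x)\|\le \tau\,\|x^{+}-x\|.$$
   Context: Weak uniform Newton differentiability: a function $F:U\subseteq\mathbb{R}^n\to\mathbb{R}^n$ is weakly uniformly Newton differentiable on $U$ if there is a set-valued map $\mathcal{H}F:U\rightrightarrows\mathbb{R}^{n\times n}$ (the Newton differential) and $c>0$ such that for all $x,y\in U$ (with $x\ne y$), $\sup_{H\in\mathcal{H}F(x)}\frac{\|F(x)-F(y)-H(x-y)\|}{\|x-y\|}\le c$; the smallest such $c$ is the constant of Newton differentiability. Single-valued adaptation: for a set-valued $F:U\rightrightarrows\mathbb{R}^n$, any selection $F_1$ of $x\mapsto \mathrm{proj}_{\overline{F(x)}}0$ is called a single-valued adaptation of $F$. Regularity Assumption: $f:U\subseteq\mathbb{R}^n\to\mathbb{R}$ is Lipschitz continuous, $U$ is small enough that $f$ has on $U$ an isolated local minimum and unique critical point at $\bar x$; $\partial_1 f$ denotes the single-valued adaptation of the Clarke subdifferential of $f$; $\partial_1 f$ is weakly uniformly Newton differentiable on $U$ with Newton differential $\mathcal{H}f$ and constant $c$; for every $x\in U$, every $H\in\mathcal{H}f(x)$ is positive definite;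 $\|H^{-1}\|\le\Omega<\infty$ and $\|H\|\le\omega<\infty$ for all $H\in\bigcup_{x\in U}\mathcal{H}f(x)$; and $c\,\Omega<1$. *)

From HB Require Import structures.
From mathcomp Require Import all_boot all_order all_algebra.
From mathcomp Require Import all_classical all_reals all_analysis.
Set Implicit Arguments. Unset Strict Implicit. Unset Printing Implicit Defensive.
Import Order.TTheory GRing.Theory Num.Theory.
Import numFieldNormedType.Exports.
Local Open Scope classical_set_scope.
Local Open Scope ring_scope.

Section Defs.
Variables (R : realType) (n : nat).
Notation vec := 'cV[R]_n.

Definition NW_dotv (u v : vec) : R := \sum_(i < n) u i 0 * v i 0.
Definition NW_enorm (v : vec) : R := Num.sqrt (NW_dotv v v).

Definition NW_opnorm (H : 'M[R]_n) : R :=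
  sup [set NW_enorm (H *m v) | v in [set v : vec | NW_enorm v <= 1]].

Definition NW_lipschitz_on (f : vec -> R) (U : set vec) : Prop :=
  exists L : R, forall x y, U x -> U y -> `|f x - f y| <= L * NW_enorm (x - y).

(* Clarke generalized directional derivative
   f°(x; v) = limsup_{y -> x, t -> 0+} (f (y + t v) - f y) / t,
   written as inf_{d > 0} sup { quotient | |y - x| < d, 0 < t < d }
   (points y, y + t v restricted to the domain U of f). *)
Definition NW_clarke_dd (f : vec -> R) (U : set vec) (x v : vec) : \bar R :=
  ereal_inf [set ereal_sup
     [set ((f (yt.1 + yt.2 *: v) - f yt.1) / yt.2)%:E
        | yt in [set yt : vec * R | NW_enorm (yt.1 - x) < d /\ 0 < yt.2 < d
                                    /\ U yt.1 /\ U (yt.1 + yt.2 *: v)]]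
     | d in [set d : R | 0 < d]].

Definition NW_clarke_subdiff (f : vec -> R) (U : set vec) (x : vec) : set vec :=
  [set g | forall v : vec, ((NW_dotv g v)%:E <= NW_clarke_dd f U x v)%E].

Definition NW_proj_set (A : set vec) (z : vec) : set vec :=
  [set p | closure A p /\ forall q, closure A q -> NW_enorm (p - z) <= NW_enorm (q - z)].

Definition NW_sv_adaptation (F : vec -> set vec) (F1 : vec -> vec) (U : set vec) : Prop :=
  forall x, U x -> NW_proj_set (F x) 0 (F1 x).

Definition NW_wu_newton_diff (F : vec -> vec) (HF : vec -> set 'M[R]_n)
  (U : set vec) (c : R) : Prop :=
  0 < c /\
  forall x y, U x -> U y -> x != y -> forall H, HF x H ->
    NW_enorm (F x - F y - H *m (x - y)) / NW_enorm (x - y) <= c.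

Definition NW_posdef (H : 'M[R]_n) : Prop :=
  forall v : vec, v != 0 -> 0 < NW_dotv v (H *m v).

Definition NW_isolated_local_min (f : vec -> R) (U : set vec) (xbar : vec) : Prop :=
  U xbar /\ exists2 d : R, 0 < d &
    forall y, U y -> 0 < NW_enorm (y - xbar) < d -> f xbar < f y.

Definition NW_critical_point (f : vec -> R) (U : set vec) (x : vec) : Prop :=
  NW_clarke_subdiff f U x 0.

Definition NW_newton_steps (d1f : vec -> vec) (HF : vec -> set 'M[R]_n)
  (U : set vec) (x : vec) : set vec :=
  [set x - invmx H *m d1f x | H in [set H | HF x H /\ \det H != 0]] `&` U.

End Defs.

(* Since x+ - x = - H^-1 d1f(x) for some H in Hf x, the residual is
   d1f(x) = H (x - x+), so |d1f(x)| <= |H| |x+ - x| <= omega |x+ - x|. *)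
From HB Require Import structures.
From mathcomp Require Import all_boot all_order all_algebra.
From mathcomp Require Import all_classical all_reals all_analysis.
Set Implicit Arguments. Unset Strict Implicit. Unset Printing Implicit Defensive.
Import Order.TTheory GRing.Theory Num.Theory.
Import numFieldNormedType.Exports.
Local Open Scope classical_set_scope.
Local Open Scope ring_scope.

Section EuclideanNorm.
Variables (R : realType) (n : nat).
Implicit Types (v : 'cV[R]_n) (H : 'M[R]_n).

Lemma NW_dotvv_ge0 v : 0 <= NW_dotv v v.
Proof. by apply: sumr_ge0 => i _; rewrite -expr2 sqr_ge0. Qed.

Lemma NW_enorm_ge0 v : 0 <= NW_enorm v.
Proof. exact: sqrtr_ge0. Qed.

Lemma NW_enorm_eq0 v : (NW_enorm v == 0) = (v == 0).
Proof.
apply/idP/eqP => [|->]; last first.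
  by rewrite /NW_enorm /NW_dotv big1 ?sqrtr0 // => i _; rewrite mxE mul0r.
rewrite sqrtr_eq0 => dot_le0.
have dot0 : NW_dotv v v = 0 by apply/eqP; rewrite eq_le dot_le0 NW_dotvv_ge0.
have sq_ge0 (i : 'I_n) : xpredT i -> 0 <= v i 0 * v i 0.
  by move=> _; rewrite -expr2 sqr_ge0.
apply/matrixP => i j; rewrite (ord1 j) mxE.
have /eqP := @psumr_eq0P R _ xpredT _ sq_ge0 dot0 i isT.
by rewrite mulf_eq0 orbb => /eqP.
Qed.

Lemma NW_enorm0 : NW_enorm (0 : 'cV[R]_n) = 0.
Proof. by apply/eqP; rewrite NW_enorm_eq0. Qed.

Lemma NW_enorm_gt0 v : (0 < NW_enorm v) = (v != 0).
Proof. by rewrite lt_def NW_enorm_ge0 andbT NW_enorm_eq0. Qed.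

Lemma NW_enormN v : NW_enorm (- v) = NW_enorm v.
Proof. by congr Num.sqrt; apply: eq_bigr => i _; rewrite !mxE mulrNN. Qed.

Lemma NW_enormZ (a : R) v : NW_enorm (a *: v) = `|a| * NW_enorm v.
Proof.
rewrite /NW_enorm.
have -> : NW_dotv (a *: v) (a *: v) = a ^+ 2 * NW_dotv v v.
  by rewrite /NW_dotv mulr_sumr; apply: eq_bigr => i _; rewrite !mxE mulrACA.
by rewrite sqrtrM ?sqr_ge0 // sqrtr_sqr.
Qed.

Lemma normr_coord_le_NW_enorm v i : `|v i 0| <= NW_enorm v.
Proof.
rewrite -sqrtr_sqr; apply: ler_wsqrtr; rewrite /NW_dotv (bigD1 i) //= expr2.
by rewrite lerDl; apply: sumr_ge0 => j _; rewrite -expr2 sqr_ge0.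
Qed.

Lemma NW_enorm_le_sum_normr v : NW_enorm v <= \sum_i `|v i 0|.
Proof.
have sum_ge0 : 0 <= \sum_i `|v i 0| by apply: sumr_ge0.
rewrite -[leRHS]ger0_norm // -sqrtr_sqr; apply: ler_wsqrtr.
rewrite expr2 mulr_suml; apply: ler_sum => i _.
rewrite mulr_sumr (bigD1 i) //= -normrM ger0_norm; last by rewrite -expr2 sqr_ge0.
by rewrite lerDl; apply: sumr_ge0 => j _; rewrite mulr_ge0.
Qed.

Lemma NW_opnorm_has_ubound H :
  has_ubound [set NW_enorm (H *m v) | v in [set v : 'cV[R]_n | NW_enorm v <= 1]].
Proof.
exists (\sum_i \sum_j `|H i j|) => _ [v /= v_le1 <-].
apply: le_trans (NW_enorm_le_sum_normr _) _; apply: ler_sum => i _.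
rewrite mxE; apply: le_trans (ler_norm_sum _ _ _) _; apply: ler_sum => j _.
rewrite normrM -[leRHS]mulr1; apply: ler_wpM2l => //.
exact: le_trans (normr_coord_le_NW_enorm _ _) v_le1.
Qed.

Lemma NW_enorm_mulmx_le H v : NW_enorm (H *m v) <= NW_opnorm H * NW_enorm v.
Proof.
have [->|v_neq0] := eqVneq v 0; first by rewrite mulmx0 NW_enorm0 mulr0.
have v_gt0 : 0 < NW_enorm v by rewrite NW_enorm_gt0.
pose w := (NW_enorm v)^-1 *: v.
have w_le1 : NW_enorm w <= 1.
  by rewrite NW_enormZ ger0_norm ?invr_ge0 ?NW_enorm_ge0 // mulVf ?gt_eqF.
have := ub_le_sup (NW_opnorm_has_ubound H) (ex_intro2 _ _ w w_le1 erefl).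
rewrite /w -scalemxAr NW_enormZ ger0_norm ?invr_ge0 ?NW_enorm_ge0 //.
by rewrite ler_pdivrMl // mulrC.
Qed.

End EuclideanNorm.

Lemma NW_newton_steps_residual_le (R : realType) (n : nat)
    (d1f : 'cV[R]_n -> 'cV[R]_n) (Hf : 'cV[R]_n -> set 'M[R]_n)
    (U : set 'cV[R]_n) (omega : R) x xp :
  (forall H, Hf x H -> NW_opnorm H <= omega) ->
  NW_newton_steps d1f Hf U x xp ->
  NW_enorm (d1f x) <= omega * NW_enorm (xp - x).
Proof.
move=> opnorm_le [[H [HfH detH] <-] _].
have H_unit : H \in unitmx by rewrite unitmxE unitfE.
rewrite addrAC subrr add0r NW_enormN.
have := NW_enorm_mulmx_le H (invmx H *m d1f x); rewrite mulKVmx // => /le_trans.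
by apply; rewrite ler_wpM2r ?NW_enorm_ge0 ?opnorm_le.
Qed.

Theorem mainTheorem2 (R : realType) (n : nat) (U : set 'cV[R]_n)
  (f : 'cV[R]_n -> R) (xbar : 'cV[R]_n)
  (d1f : 'cV[R]_n -> 'cV[R]_n) (Hf : 'cV[R]_n -> set 'M[R]_n)
  (c Omega omega : R) :
  open U ->
  NW_lipschitz_on f U ->
  NW_isolated_local_min f U xbar ->
  (forall x, U x -> NW_critical_point f U x <-> x = xbar) ->
  NW_sv_adaptation (NW_clarke_subdiff f U) d1f U ->
  NW_wu_newton_diff d1f Hf U c ->
  (forall x, U x -> forall H, Hf x H -> NW_posdef H) ->
  (forall x, U x -> forall H, Hf x H -> NW_opnorm (invmx H) <= Omega) ->
  (forall x, U x -> forall H, Hf x H -> NW_opnorm H <= omega) ->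
  c * Omega < 1 ->
  exists tau : R, 0 < tau /\
    forall x, U x -> forall xp, NW_newton_steps d1f Hf U x xp ->
      NW_enorm (d1f x) <= tau * NW_enorm (xp - x).
Proof.
move=> _ _ _ _ _ _ _ _ opnorm_le_omega _.
exists (Num.max omega 1); split; first by rewrite lt_max ltr01 orbT.
move=> x Ux xp step.
apply: le_trans (NW_newton_steps_residual_le (opnorm_le_omega x Ux) step) _.
by apply: ler_wpM2r; rewrite ?NW_enorm_ge0 ?le_max ?lexx.
Qed.
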